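(* Let $F$ be a tame Dirichlet species with $F(1)=\emptyset$ (i.e. $F$ is empty on one-element sets). Then the Dirichlet exponential $\exp_D(F)$ is tame and its Dirichlet series satisfies $\widehat{\exp_D(F)}=\exp(\widehat{F})$.
   Context: A species is a functor from the groupoid of finite sets and bijections to $\mathbf{Set}$; it is tame if all its values are finite; a Dirichlet species is one with $F(\emptyset)=\emptyset$. For a tame species $F$, $\widehat{F}(s)=\sum_{n\ge1}\frac{|F(n)|}{n!}n^{-s}$ (formal Dirichlet series), with $F(n)$ the value on an $n$-element set. Formal Dirichlet series multiply by Dirichlet convolution of coefficients, and for $f$ with vanishing coefficient of $1^{-s}$, $\exp(f)=\sum_{m\ge0}f^m/m!$. Dirichlet product: a cartesian decomposition of a finite set $S$ is an ordered pair $(\pi_1,\pi_2)$ of equivalence relations on $S$ such that each $\pi_1$-class meets each $\pi_2$-class in exactly one element; with $S_i$ the set of $\pi_i$-classes, $(F\cdot_D G)(S)=\coprod_{(\pi_1,\pi_2)}F(S_1)\times G(S_2)$. This is symmetric monoidal on Dirichlet species with unit $I$, where $I(S)$ is a singleton if $|S|=1$ and empty otherwise. Dirichlet exponential: $F^n_D=F\cdot_D\cdots\cdot_D F$ ($n$ factors) for $n\ge1$, $F^0_D=I$; the symmetric group $S_n$ acts on $F^n_D$ via the symmetry of $\cdot_D$ (permuting the factors); $\exp_D(F)=\coprod_{n\ge0}F^n_D/S_n$, quotients and coproducts computed pointwise. *)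

From mathcomp Require Import all_boot all_algebra perm.
Set Implicit Arguments.
Unset Strict Implicit.
Unset Printing Implicit Defensive.
Import GRing.Theory.

Record species := Species {
  sp_obj :> finType -> Type;
  sp_map : forall (A B : finType) (f : A -> B), bijective f -> sp_obj A -> sp_obj B;
  sp_map_id : forall (A : finType) (h : bijective (@id A)) (x : sp_obj A),
      sp_map h x = x;
  sp_map_comp : forall (A B C : finType) (f : A -> B) (g : B -> C)
      (hf : bijective f) (hg : bijective g) (hgf : bijective (g \o f))
      (x : sp_obj A), sp_map hgf x = sp_map hg (sp_map hf x)
}.

Definition has_card (X : Type) (n : nat) : Prop :=
  exists f : X -> 'I_n, bijective f.

Definition is_finite (X : Type) : Prop := exists n, has_card X n.

Definition tame_fam (G : finType -> Type) : Prop :=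
  forall S : finType, is_finite (G S).

Definition tame (F : species) : Prop := tame_fam F.

Definition dirichlet (F : species) : Prop :=
  forall S : finType, #|S| = 0 -> F S -> False.

Definition classes (S : finType) (r : rel S) : {set {set S}} :=
  [set [set y | r x y] | x : S].

Definition classT (S : finType) (r : rel S) : finType :=
  {X : {set S} | X \in classes r}.

(* n-fold cartesian decomposition (pi_1, ..., pi_n) of S: each pi_i an
   equivalence relation, and any choice of one pi_i-class for each i meets in
   exactly one element (i.e. S -> prod_i S/pi_i is a bijection). *)
Definition cartdec (n : nat) (S : finType) (d : 'I_n -> rel S) : Prop :=
  [/\ forall i, equivalence_rel (d i),
      forall x y : S, (forall i, d i x y) -> x = y
    & forall y : 'I_n -> S, exists x : S, forall i, d i x (y i)].

Definition rawD (F : species) (n : nat) (S : finType) : Type :=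
  {d : 'I_n -> rel S & forall i : 'I_n, F (classT (d i))}.

Definition powD (F : species) (n : nat) (S : finType) : Type :=
  {p : rawD F n S | cartdec (projT1 p)}.

Definition permD (F : species) (n : nat) (S : finType) (s : 'S_n)
    (p : rawD F n S) : rawD F n S :=
  existT (fun d : 'I_n -> rel S => forall i : 'I_n, F (classT (d i)))
    (fun i => projT1 p (s i)) (fun i => projT2 p (s i)).

Definition orbD (F : species) (n : nat) (S : finType) (p q : powD F n S) : Prop :=
  exists s : 'S_n, proj1_sig q = permD s (proj1_sig p).

(* quotient of a type by a relation (set of equivalence classes) *)
Definition quot (X : Type) (R : X -> X -> Prop) : Type :=
  {P : X -> Prop | exists x : X, P = R x}.

Definition expD (F : species) (S : finType) : Type :=
  {n : nat & quot (@orbD F n S)}.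

(* f n is the coefficient of n^{-s}, for n >= 1 (index 0 is ignored). *)
Definition dser := nat -> rat.

Definition dmul (f g : dser) : dser :=
  fun n => (\sum_(d <- divisors n) f d * g (n %/ d)%N)%R.

Definition dunit : dser := fun n => ((n == 1)%:R)%R.

Definition dpow (f : dser) (m : nat) : dser := iter m (dmul f) dunit.

(* exp(f) = sum_{m>=0} f^m/m!; when f 1 = 0 the coefficient of n^{-s} in f^m
   vanishes for m > n, so the coefficientwise sum is finite. *)
Definition dexp (f : dser) : dser :=
  fun n => (\sum_(m < n.+1) dpow f m n / (m`!)%:R)%R.

(* An element of F^m_D(S) is a cartesian decomposition (pi_1, ..., pi_m) of S with an
   F-structure on each quotient S/pi_i.  Numbering the classes of each pi_i by 0, ..., k_i - 1
   turns a decomposition with class numbers k_i into a bijection ("chart") of S onto the box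
   [0, k_1) x ... x [0, k_m), and conversely the coordinate kernels of a chart form a cartesian
   decomposition.  Counting pairs (decomposition, numbering) both ways gives
   |F^m_D(S)| = |S|! [|S|^-s] Fhat^m.  As F is empty on sets with at most one element, every
   factor has at least two classes: hence S_m acts freely, so |F^m_D(S)/S_m| = |F^m_D(S)|/m!,
   and F^m_D(S) is empty as soon as 2^m > |S|.  Summing over m gives the coefficient of
   |S|^-s in exp(Fhat). *)

From mathcomp Require Import all_boot all_algebra fingroup perm.
From Stdlib Require Import ClassicalEpsilon ProofIrrelevance.
From Stdlib Require Import FunctionalExtensionality PropExtensionality Eqdep.
Set Implicit Arguments.
Unset Strict Implicit.
Unset Printing Implicit Defensive.

Definition asbool (P : Prop) : bool :=
  if excluded_middle_informative P then true else false.

Lemma asboolP (P : Prop) : reflect P (asbool P).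
Proof. by rewrite /asbool; case: excluded_middle_informative => h; constructor. Qed.

Lemma inj_surj_bijective (X Y : Type) (f : X -> Y) :
  injective f -> (forall y, exists x, f x = y) -> bijective f.
Proof.
move=> f_inj f_surj.
pose g y := proj1_sig (constructive_indefinite_description _ (f_surj y)).
have gK : cancel g f by move=> y; rewrite /g; case: constructive_indefinite_description.
by exists g => // x; apply: f_inj; rewrite gK.
Qed.

Lemma has_card_bij (X Y : Type) (f : X -> Y) :
  bijective f -> forall n, has_card X n <-> has_card Y n.
Proof.
case=> g fK gK n; split=> -[h [h' hK h'K]].
  by exists (h \o g); exists (f \o h') => y /=; rewrite ?hK ?h'K ?gK ?fK.
by exists (h \o f); exists (g \o h') => y /=; rewrite ?hK ?h'K ?gK ?fK.
Qed.

Lemma has_card_card (T : finType) : has_card T #|T|.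
Proof. by exists enum_rank; exact: enum_rank_bij. Qed.

Lemma has_card_uniq (X : Type) (n m : nat) : has_card X n -> has_card X m -> n = m.
Proof.
move=> [f [f' fK f'K]] [g [g' gK g'K]].
have gf'_bij : bijective (g \o f') by exists (f \o g') => x /=; rewrite ?gK ?f'K ?g'K ?fK.
by have := bij_eq_card gf'_bij; rewrite !card_ord.
Qed.

Definition empty_ord_elim (X : Type) (i : 'I_0) : X := False_rect X (notF (ltn_ord i)).

Lemma has_card0 (X : Type) : has_card X 0 <-> (X -> False).
Proof.
split=> [[f _] x | X0]; first by case: (f x).
exists (fun x => match X0 x with end).
by exists (@empty_ord_elim X) => [x | []//]; case: (X0 x).
Qed.

Lemma is_finite_inj (X Y : Type) (f : Y -> X) : is_finite X -> injective f -> is_finite Y.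
Proof.
move=> [n [h [h' hK _]]] f_inj.
pose J := {i : 'I_n | asbool (exists y, h (f y) = i)}.
have inJ y : asbool (exists y', h (f y') = h (f y)) by apply/asboolP; exists y.
have toJ_bij : bijective (fun y => exist _ (h (f y)) (inJ y) : J).
  apply: inj_surj_bijective => [y y' E | [i iJ]].
    by apply/f_inj/(can_inj hK); exact: (congr1 val E).
  by have /asboolP [y hy] := iJ; exists y; apply: val_inj.
by exists #|{: J}|; apply/(has_card_bij toJ_bij)/has_card_card.
Qed.

Lemma has_card_tagged (T : finType) (Y : T -> Type) (c : T -> nat) :
  (forall t, has_card (Y t) (c t)) -> has_card {t : T & Y t} (\sum_t c t).
Proof.
move=> hY; pose g t := proj1_sig (constructive_indefinite_description _ (hY t)).
have g_bij t : bijective (g t).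
  by rewrite /g; case: constructive_indefinite_description.
have cardM : #|{: {t : T & 'I_(c t)}}| = \sum_t c t.
  by rewrite card_tagged sumnE big_map big_enum; apply: eq_bigr => t _; rewrite card_ord.
have G_bij : bijective (fun p : {t : T & Y t} => Tagged (fun t => 'I_(c t)) (g (tag p) (tagged p))).
  apply: inj_surj_bijective => [[t y] [t' y'] /= E | [t i]].
    have tt' : t = t' := congr1 tag E.
    by subst t'; rewrite (bij_inj (g_bij t) (inj_pair2 _ _ _ _ _ E)).
  by have [g' _ g'K] := g_bij t; exists (Tagged _ (g' i)); rewrite /= g'K.
by rewrite -cardM; apply/(has_card_bij G_bij)/has_card_card.
Qed.

Lemma has_card_dprod (m : nat) (Y : 'I_m -> Type) (c : 'I_m -> nat) :
  (forall i, has_card (Y i) (c i)) -> has_card (forall i, Y i) (\prod_i c i).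
Proof.
move=> hY; pose g i := proj1_sig (constructive_indefinite_description _ (hY i)).
have g_bij i : bijective (g i).
  by rewrite /g; case: constructive_indefinite_description.
have cardM : #|{: {dffun forall i : 'I_m, 'I_(c i)}}| = \prod_i c i.
  by rewrite card_dep_ffun foldrE big_map big_enum; apply: eq_bigr => i _; rewrite card_ord.
have G_bij : bijective
    (fun p : forall i, Y i => [ffun i => g i (p i)] : {dffun forall i, 'I_(c i)}).
  apply: inj_surj_bijective => [p q E|q].
    apply: functional_extensionality_dep => i; apply: (bij_inj (g_bij i)).
    by have := congr1 (fun r : {dffun forall i, 'I_(c i)} => r i) E; rewrite !ffunE.
  have g_surj i : exists y, g i y = q i by have [g' _ g'K] := g_bij i; exists (g' (q i)).
  exists (fun i => proj1_sig (constructive_indefinite_description _ (g_surj i))).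
  by apply/ffunP => i; rewrite ffunE; case: constructive_indefinite_description.
by rewrite -cardM; apply/(has_card_bij G_bij)/has_card_card.
Qed.

Lemma has_card_pair (X Y : Type) (n m : nat) :
  has_card X n -> has_card Y m -> has_card (X * Y) (n * m).
Proof.
move=> [f [f' fK f'K]] [g [g' gK g'K]].
have G_bij : bijective (fun p : 'I_n * 'I_m => (f' p.1, g' p.2)).
  by exists (fun p => (f p.1, g p.2)) => -[x y] /=; rewrite ?fK ?gK ?f'K ?g'K.
by have := @has_card_card ('I_n * 'I_m)%type; rewrite card_prod !card_ord => /(has_card_bij G_bij).
Qed.

Lemma has_card_pair_divl (X Y : Type) (k p : nat) :
  has_card (X * Y) p -> has_card Y k -> 0 < k -> exists q, has_card X q /\ q * k = p.
Proof.
move=> hXY hY k_gt0; have [_ [g' _ _]] := hY.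
have [q hX] : is_finite X.
  apply: (is_finite_inj (f := fun x : X => (x, g' (Ordinal k_gt0)))); first by exists p.
  by move=> x x' [].
by exists q; split=> //; apply: has_card_uniq (has_card_pair hX hY) hXY.
Qed.

Section SpeciesTransport.
Variable F : species.

Lemma sp_map_eq (A B : finType) (f g : A -> B) (hf : bijective f) (hg : bijective g) :
  f = g -> @sp_map F _ _ f hf =1 sp_map hg.
Proof. by move=> fg x; subst g; rewrite (proof_irrelevance _ hf hg). Qed.

Lemma sp_map_can (A B : finType) (f : A -> B) (g : B -> A)
    (hf : bijective f) (hg : bijective g) :
  cancel f g -> cancel (@sp_map F _ _ f hf) (sp_map hg).
Proof.
move=> fK x; have hgf : bijective (g \o f) by exists (g \o f) => y /=; rewrite !fK.
have hid : bijective (@id A) by exists id.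
rewrite -(sp_map_comp hf hg hgf) (sp_map_eq hgf hid (functional_extensionality _ _ fK)).
exact: sp_map_id.
Qed.

Lemma sp_map_bij (A B : finType) (f : A -> B) (hf : bijective f) :
  bijective (@sp_map F _ _ f hf).
Proof.
have [g fK gK] := hf; have hg : bijective g by exists f.
by exists (sp_map hg); apply: sp_map_can.
Qed.

Lemma has_card_species (a : nat -> nat) :
  (forall n, has_card (F 'I_n) (a n)) -> forall A : finType, has_card (F A) (a #|A|).
Proof. by move=> ha A; apply/(has_card_bij (sp_map_bij (@enum_val_bij A)))/ha. Qed.

End SpeciesTransport.

Section DirichletPowers.
Import GRing.Theory Num.Theory.
Local Open Scope ring_scope.

Lemma fact_neq0 n : (n`!)%:R != 0 :> rat.
Proof. by rewrite pnatr_eq0 -lt0n fact_gt0. Qed.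

Definition ffun_cons (T : Type) (m : nat) (t : T) (k : {ffun 'I_m -> T}) : {ffun 'I_m.+1 -> T} :=
  [ffun i => if unlift ord0 i is Some j then k j else t].

Lemma ffun_cons0 (T : Type) m t (k : {ffun 'I_m -> T}) : ffun_cons t k ord0 = t.
Proof. by rewrite ffunE unlift_none. Qed.

Lemma ffun_consS (T : Type) m t (k : {ffun 'I_m -> T}) j : ffun_cons t k (lift ord0 j) = k j.
Proof. by rewrite ffunE liftK. Qed.

Lemma ffun_cons_bij (T : Type) m :
  bijective (fun p : T * {ffun 'I_m -> T} => ffun_cons p.1 p.2).
Proof.
exists (fun k : {ffun 'I_m.+1 -> T} => (k ord0, [ffun j : 'I_m => k (lift ord0 j)]))
  => [[t k] | k] /=.
  by rewrite ffun_cons0; congr pair; apply/ffunP => j; rewrite ffunE ffun_consS.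
by apply/ffunP => i; rewrite ffunE; case: unliftP => [j ->|->]; rewrite ?ffunE.
Qed.

Lemma sum_divisors_ord (g : nat -> rat) (N B : nat) : (0 < N)%N -> (N <= B)%N ->
  \sum_(d <- divisors N) g d = \sum_(t < B.+1 | (t : nat) \in divisors N) g t.
Proof.
move=> N_gt0 NB; rewrite -(big_mkord (fun t => t \in divisors N)) -big_filter.
apply/perm_big/uniq_perm; rewrite ?divisors_uniq ?filter_uniq ?iota_uniq // => d.
rewrite mem_filter mem_iota; case dN: (d \in divisors N); rewrite ?andbF //= add0n subn0 ltnS.
by rewrite (leq_trans (dvdn_leq N_gt0 _) NB) // dvdn_divisors.
Qed.

Lemma dpow_ffun_sum (f : dser) (m B N : nat) : (0 < N)%N -> (N <= B)%N ->
  dpow f m N = \sum_(k : {ffun 'I_m -> 'I_B.+1} | (\prod_i (k i : nat) == N)%N)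
                 \prod_i f (k i).
Proof.
elim: m N => [|m IHm] N N_gt0 NB.
  under eq_bigl do rewrite big_ord0.
  under eq_bigr do rewrite big_ord0.
  rewrite /dpow /dunit /= eq_sym; case: (1 == N)%N; last by rewrite big_pred0.
  by rewrite sumr_const (cardT {ffun 'I_0 -> 'I_B.+1}) -cardT card_ffun !card_ord.
rewrite [LHS]/dpow iterS -/(dpow f m) /dmul (sum_divisors_ord _ N_gt0 NB).
rewrite (reindex _ (onW_bij _ (@ffun_cons_bij 'I_B.+1 m))).
transitivity (\sum_(t < B.+1) \sum_(k : {ffun 'I_m -> 'I_B.+1} | (t * \prod_i (k i : nat) == N)%N)
                f t * \prod_i f (k i)); last first.
  rewrite pair_big_dep; apply: eq_big => [p|p _]; rewrite [in RHS]big_ord_recl ffun_cons0;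
    under [in RHS]eq_bigr do rewrite ffun_consS; reflexivity.
rewrite [RHS](bigID (fun t : 'I_B.+1 => (t : nat) \in divisors N)) /= [X in _ + X]big1 ?addr0.
  apply: eq_bigr => t tN; have t_dvd : (t %| N)%N by rewrite dvdn_divisors.
  have t_gt0 : (0 < t)%N by apply: contraTT N_gt0; rewrite -!eqn0Ngt => /eqP t0; rewrite -dvd0n -t0.
  have Nt_gt0 : (0 < N %/ t)%N by rewrite divn_gt0 // dvdn_leq.
  rewrite (IHm _ Nt_gt0 (leq_trans (leq_div _ _) NB)) big_distrr.
  by apply: eq_bigl => k; rewrite eqn_div // mulnC.
move=> t tN; apply: big_pred0 => k; apply: contraNF tN => /eqP tkN.
by rewrite -dvdn_divisors // -tkN dvdn_mulr.
Qed.

Lemma dpow_eq0 (f : dser) (m N : nat) : f 1%N = 0 -> (0 < N)%N -> (N <= m)%N -> dpow f m N = 0.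
Proof.
move=> f1 N_gt0 Nm; rewrite (dpow_ffun_sum _ _ N_gt0 (leqnn N)); apply: big1 => k /eqP kN.
case: (pickP (fun i => k i <= 1)%N) => [i ki_le1 | k_gt1]; last first.
  have : (2 ^ m <= N)%N.
    rewrite -kN -[m in (2 ^ m)%N]card_ord -prod_nat_const leq_prod // => i _.
    by rewrite ltnNge k_gt1.
  by rewrite leqNgt (leq_ltn_trans Nm) // ltn_expl.
have ki1 : k i = 1%N :> nat.
  apply/eqP; rewrite eqn_leq ki_le1 lt0n; apply: contraTneq N_gt0 => ki0.
  by rewrite -kN (bigD1 i) //= ki0.
by rewrite (bigD1 i) //= ki1 f1 mul0r.
Qed.

End DirichletPowers.

(* Relations are encoded as boolean finite functions on pairs, so that families of them form a
   finite type over which decompositions can be summed. *)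
Definition ffun_rel (S : finType) (e : {ffun S * S -> bool}) : rel S := fun u v => e (u, v).

Definition rel_ffun (S : finType) (r : rel S) : {ffun S * S -> bool} := [ffun p => r p.1 p.2].

Lemma rel_ffunK (S : finType) : cancel (@rel_ffun S) (@ffun_rel S).
Proof.
move=> r; apply: functional_extensionality => u; apply: functional_extensionality => v.
by rewrite /ffun_rel ffunE.
Qed.

Lemma ffun_relK (S : finType) : cancel (@ffun_rel S) (@rel_ffun S).
Proof. by move=> e; apply/ffunP => -[u v]; rewrite ffunE. Qed.

Definition kernel (S T : finType) (psi : {ffun S -> T}) : {ffun S * S -> bool} :=
  [ffun p => psi p.1 == psi p.2].

Lemma ffun_rel_kernel (S T : finType) (psi : {ffun S -> T}) u v :
  ffun_rel (kernel psi) u v = (psi u == psi v).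
Proof. by rewrite /ffun_rel ffunE. Qed.

Lemma card_classes_le (S : finType) (r : rel S) : #|classes r| <= #|S|.
Proof. exact: leq_imset_card. Qed.

Lemma card_classes_image (S T : finType) (r : rel S) (psi : S -> T) :
  r =2 (fun u v => psi u == psi v) -> #|classes r| = #|[set psi u | u : S]|.
Proof.
move=> r_psi; pose fiber t := [set y | t == psi y].
have -> : classes r = [set fiber t | t in [set psi u | u : S]].
  rewrite -imset_comp; apply: eq_imset => u /=.
  by apply/setP => y; rewrite !inE r_psi.
apply: card_in_imset => _ t2 /imsetP [u _ ->] _ E.
have : u \in fiber t2 by rewrite -E inE.
by rewrite inE => /eqP.
Qed.

Lemma card_ord_ltn (n c : nat) : c <= n -> #|[set j : 'I_n | j < c]| = c.
Proof.
move=> cn; have widen_inj : injective (widen_ord cn).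
  by move=> i j E; apply: val_inj; exact: (congr1 val E).
rewrite -[RHS](card_ord c) -(card_imset _ widen_inj).
apply: eq_card => j; rewrite !inE; apply/idP/imsetP => [jc|[j' _ ->]]; last by rewrite /= ltn_ord.
by exists (Ordinal jc) => //; apply: val_inj.
Qed.

Lemma card_classT (S : finType) (r : rel S) : #|{: classT r}| = #|classes r|.
Proof. by rewrite card_sig; apply: eq_card => X; rewrite !inE. Qed.

Lemma card_classT_gt1 (S : finType) (r : rel S) :
  equivalence_rel r -> 1 < #|classT r| -> exists u v, ~~ r u v.
Proof.
move=> r_equiv; rewrite card_sig => /card_gt1P [X [Y [X_cls Y_cls XY]]].
rewrite !inE in X_cls Y_cls.
have [u _ X_u] := imsetP X_cls; have [v _ Y_v] := imsetP Y_cls.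
exists u, v; apply: contra XY => ruv; rewrite X_u Y_v; apply/eqP/setP => w.
by rewrite !inE (r_equiv u v w).2.
Qed.

Section Labellings.
Variables (S : finType) (e : {ffun S * S -> bool}).
Hypothesis e_equiv : equivalence_rel (ffun_rel e).
Local Notation r := (ffun_rel e).
Local Notation c := #|classes r|.
Local Notation T := 'I_#|S|.+1.

Definition class_of (u : S) : classT r :=
  exist (fun X => X \in classes r) [set y | r u y] (imset_f _ (isT : u \in S)).

Lemma class_of_eq u v : (class_of u == class_of v) = r u v.
Proof.
apply/eqP/idP => [/(congr1 val) /= E | ruv]; last first.
  by apply: val_inj; apply/setP => y; rewrite !inE (e_equiv u v y).2.
have : v \in [set y | r v y] by rewrite inE (e_equiv v v v).1.
by rewrite -E inE.
Qed.

Lemma class_of_surj (X : classT r) : exists u, X = class_of u.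
Proof.
case: X => X X_cls; have /imsetP [u _ X_u] := X_cls.
by exists u; apply: val_inj.
Qed.

Definition labellings : {set {ffun S -> T}} :=
  [set psi | (kernel psi == e) && ([set psi u | u : S] == [set j : T | j < c])].

Definition lift_label (g : {ffun classT r -> T}) : {ffun S -> T} := [ffun u => g (class_of u)].

Lemma lift_label_inj : injective lift_label.
Proof.
move=> g1 g2 E; apply/ffunP => X; have [u ->] := class_of_surj X.
by have := congr1 (fun h : {ffun S -> T} => h u) E; rewrite !ffunE.
Qed.

Lemma image_lift_label g : [set lift_label g u | u : S] = [set g X | X : classT r].
Proof.
apply/setP => j; apply/imsetP/imsetP => [[u _ ->] | [X _ ->]].
  by exists (class_of u) => //; rewrite ffunE.
by have [u ->] := class_of_surj X; exists u => //; rewrite ffunE.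
Qed.

Lemma labellingsE : labellings =
  lift_label @: [set g in ffun_on (mem [set j : T | j < c]) | injectiveb g].
Proof.
have card_lt_c : #|[set j : T | j < c]| = c by rewrite card_ord_ltn // leqW ?card_classes_le.
apply/setP => psi; rewrite inE; apply/andP/imsetP => [[/eqP psi_ker /eqP psi_img] | [g]].
  pose g : {ffun classT r -> T} :=
    [ffun X : classT r => if [pick y in val X] is Some y then psi y else ord0].
  have g_class u : g (class_of u) = psi u.
    rewrite ffunE; case: pickP => [y /= uy | /(_ u) /=]; last by rewrite inE (e_equiv u u u).1.
    by apply/eqP; rewrite eq_sym -(ffun_rel_kernel psi) psi_ker; move: uy; rewrite inE.
  exists g; last by apply/ffunP => u; rewrite ffunE g_class.
  rewrite inE; apply/andP; split.
    by apply/ffun_onP => X; have [u ->] := class_of_surj X; rewrite g_class -psi_img imset_f.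
  apply/injectiveP => X1 X2; have [u1 ->] := class_of_surj X1; have [u2 ->] := class_of_surj X2.
  by rewrite !g_class => E; apply/eqP; rewrite class_of_eq -psi_ker ffun_rel_kernel E.
rewrite inE => /andP [/ffun_onP g_img /injectiveP g_inj] ->; split.
  by apply/eqP/ffunP => -[u v]; rewrite !ffunE /= (inj_eq g_inj) class_of_eq.
rewrite image_lift_label eqEcard (card_imset _ g_inj) card_classT card_lt_c leqnn andbT.
by apply/subsetP => j /imsetP [X _ ->]; apply: g_img.
Qed.

Lemma card_labellings : #|labellings| = c`!.
Proof.
rewrite labellingsE (card_imset _ lift_label_inj) card_inj_ffuns_on card_classT.
by rewrite card_ord_ltn ?ffactnn // leqW ?card_classes_le.
Qed.

End Labellings.

Section Charts.
Variables (S : finType) (m : nat).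
Hypothesis S_gt0 : 0 < #|S|.
Local Notation N := #|S|.
Local Notation T := 'I_N.+1.
Local Notation K := {ffun 'I_m -> T}.
Local Notation Phi := {ffun 'I_m -> {ffun S -> T}}.
Local Notation Dec := {ffun 'I_m -> {ffun S * S -> bool}}.

Definition box (k : K) : {set K} := [set t : K | [forall i, t i < k i]].

Definition coords (phi : Phi) : {ffun S -> K} := [ffun u => [ffun i => phi i u]].

Definition chart (k : K) (phi : Phi) : bool :=
  [&& coords phi \in ffun_on (mem (box k)), injectiveb (coords phi)
    & box k \subset [set coords phi u | u : S]].

Lemma coordsE (phi : Phi) u i : coords phi u i = phi i u.
Proof. by rewrite !ffunE. Qed.

Lemma chartP (k : K) (phi : Phi) : reflect
  [/\ forall i u, phi i u < k i, injective (coords phi) &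
      forall t : K, (forall i, t i < k i) -> exists u, coords phi u = t] (chart k phi).
Proof.
apply: (iffP and3P) => [[/ffun_onP in_box /injectiveP inj /subsetP onto] | [in_box inj onto]].
  split=> // [i u | t t_box].
    by have := in_box u; rewrite inE => /forallP /(_ i); rewrite coordsE.
  have /onto /imsetP [u _ ->] : t \in box k by rewrite inE; apply/forallP.
  by exists u.
split; [apply/ffun_onP => u | exact/injectiveP | apply/subsetP => t].
  by rewrite inE; apply/forallP => i; rewrite coordsE.
by rewrite inE => /forallP /onto [u <-]; apply: imset_f.
Qed.

Lemma card_box (k : K) : #|box k| = (\prod_i k i)%N.
Proof.
rewrite (eq_card (B := family (fun i => [pred j : T | j < k i]))); last first.
  by move=> t; rewrite inE; apply/forallP/familyP => t_box i; have := t_box i.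
rewrite card_family foldrE big_map big_enum; apply: eq_bigr => i _.
rewrite -[RHS](card_ord_ltn (ltnW (ltn_ord (k i)))).
by apply: eq_card => j; rewrite !inE.
Qed.

Lemma card_charts (k : K) : #|[set phi | chart k phi]| = if (\prod_i k i == N)%N then N`! else 0.
Proof.
have coords_inj : injective coords.
  by move=> phi psi E; apply/ffunP => i; apply/ffunP => u; rewrite -!coordsE E.
rewrite -card_box -(card_imset _ coords_inj).
case: eqP => [box_N | box_neqN]; last first.
  apply/eqP; rewrite cards_eq0 -subset0; apply/subsetP => psi /imsetP [phi].
  rewrite inE => /and3P [/ffun_onP in_box /injectiveP inj onto] _.
  have img_box : [set coords phi u | u : S] \subset box k.
    by apply/subsetP => t /imsetP [u _ ->].
  have card_img : #|[set coords phi u | u : S]| = N by rewrite card_imset.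
  case: box_neqN; apply/eqP.
  by rewrite -[X in _ == X]card_img eqn_leq (subset_leq_card onto) (subset_leq_card img_box).
transitivity (#|box k| ^_ N); last by rewrite box_N ffactnn.
rewrite -card_inj_ffuns_on; apply: eq_card => psi.
rewrite inE; apply/imsetP/andP => [[phi] | [psi_box psi_inj]].
  by rewrite inE => /and3P [? ? _] ->.
have psi_coords : psi = coords [ffun i => [ffun u => psi u i]].
  by apply/ffunP => u; apply/ffunP => i; rewrite coordsE !ffunE.
exists [ffun i => [ffun u => psi u i]] => //; rewrite inE /chart -psi_coords psi_box psi_inj.
have psi_sub : [set psi u | u : S] \subset box k.
  by apply/subsetP => t /imsetP [u _ ->]; apply: (ffun_onP psi_box).
have /eqP <- : [set psi u | u : S] == box k; last by rewrite subxx.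
by rewrite eqEcard psi_sub (card_imset _ (injectiveP _ psi_inj)) box_N /=.
Qed.

Definition kernels (phi : Phi) : Dec := [ffun i => kernel (phi i)].

Definition is_cartdec (x : Dec) : bool := asbool (cartdec (fun i => ffun_rel (x i))).

Definition nclasses (x : Dec) (i : 'I_m) : nat := #|classes (ffun_rel (x i))|.

Lemma ffun_rel_kernels (phi : Phi) i u v : ffun_rel (kernels phi i) u v = (phi i u == phi i v).
Proof. by rewrite ffunE ffun_rel_kernel. Qed.

Lemma chart_cartdec (k : K) (phi : Phi) :
  chart k phi -> cartdec (fun i => ffun_rel (kernels phi i)).
Proof.
case/chartP => in_box inj onto; split.
- by move=> i u v w; rewrite !ffun_rel_kernels eqxx; split=> // /eqP ->.
- move=> u v uv; apply: inj; apply/ffunP => i; rewrite !coordsE.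
  by apply/eqP; rewrite -ffun_rel_kernels.
- move=> y; have [i|u u_y] := onto [ffun i => phi i (y i)]; first by rewrite ffunE in_box.
  by exists u => i; rewrite ffun_rel_kernels -coordsE u_y ffunE.
Qed.

Lemma chart_image (k : K) (phi : Phi) i :
  chart k phi -> [set phi i u | u : S] = [set j : T | j < k i].
Proof.
case/chartP => in_box _ onto; apply/setP => j; rewrite inE.
apply/imsetP/idP => [[u _ ->] | j_lt]; first exact: in_box.
have [u0 _] := card_gt0P S_gt0.
have [|u u_j] := onto [ffun i' => if i' == i then j else phi i' u0] => [i'|].
  by rewrite ffunE; case: eqP => [->|].
by exists u => //; have := congr1 (fun t : K => t i) u_j; rewrite coordsE ffunE eqxx.
Qed.

Lemma nclasses_kernels (k : K) (phi : Phi) i : chart k phi -> nclasses (kernels phi) i = k i.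
Proof.
move=> phi_chart; rewrite /nclasses (card_classes_image (psi := phi i)) => [|u v].
  by rewrite (chart_image i phi_chart) card_ord_ltn // ltnW.
by rewrite ffun_rel_kernels.
Qed.

Definition nclasses_ffun (x : Dec) : K := [ffun i => inord (nclasses x i)].

Lemma nclasses_ffunE x i : nclasses_ffun x i = nclasses x i :> nat.
Proof. by rewrite ffunE inordK // ltnS card_classes_le. Qed.

Lemma labellings_chart (x : Dec) (phi : Phi) : cartdec (fun i => ffun_rel (x i)) ->
  (forall i, phi i \in labellings (x i)) -> chart (nclasses_ffun x) phi /\ kernels phi = x.
Proof.
move=> [_ x_inj x_onto] phi_lab.
have [phi_ker phi_img] : (forall i, kernel (phi i) = x i) /\
    (forall i, [set phi i u | u : S] = [set j : T | j < nclasses x i]).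
  by split=> i; have := phi_lab i; rewrite inE => /andP [/eqP ? /eqP ?].
have x_phi i u v : ffun_rel (x i) u v = (phi i u == phi i v) by rewrite -phi_ker ffun_rel_kernel.
split; last by apply/ffunP => i; rewrite ffunE phi_ker.
apply/chartP; split.
- move=> i u; rewrite nclasses_ffunE.
  have : phi i u \in [set phi i u | u : S] by apply: imset_f.
  by rewrite phi_img inE.
- by move=> u v uv; apply: x_inj => i; rewrite x_phi -!coordsE uv.
move=> t t_lt; have [u0 _] := card_gt0P S_gt0.
pose y i := odflt u0 [pick u | phi i u == t i].
have phi_y i : phi i (y i) = t i.
  rewrite /y; case: pickP => [u /eqP // | no_u].
  have : t i \in [set phi i u | u : S] by rewrite phi_img inE -nclasses_ffunE.
  by case/imsetP => u _ ti; have := no_u u; rewrite ti eqxx.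
have [u u_y] := x_onto y; exists u; apply/ffunP => i.
by rewrite coordsE; apply/eqP; rewrite -phi_y -x_phi u_y.
Qed.

Lemma chart_kernels_eq (x : Dec) (k : K) (phi : Phi) : is_cartdec x ->
  (chart k phi && (kernels phi == x)) =
  (k == nclasses_ffun x) && (phi \in family (fun i => mem (labellings (x i)))).
Proof.
move/asboolP => x_cd; apply/idP/idP => [/andP [phi_chart /eqP <-] | ].
  have -> : k = nclasses_ffun (kernels phi).
    by apply/ffunP => i; apply: ord_inj; rewrite nclasses_ffunE (nclasses_kernels _ phi_chart).
  rewrite eqxx; apply/familyP => i; rewrite inE ffunE eqxx /=.
  by have := nclasses_kernels i phi_chart; rewrite /nclasses ffunE (chart_image _ phi_chart) => ->.
case/andP => /eqP -> /familyP phi_lab.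
by have [-> ->] := labellings_chart x_cd phi_lab; rewrite !eqxx.
Qed.

Lemma card_charts_of_cartdec (x : Dec) : is_cartdec x ->
  #|[set p : K * Phi | chart p.1 p.2 && (kernels p.2 == x)]| = (\prod_i (nclasses x i)`!)%N.
Proof.
move=> x_cd; have /asboolP [x_equiv _ _] := x_cd.
have -> : [set p : K * Phi | chart p.1 p.2 && (kernels p.2 == x)] =
    [set (nclasses_ffun x, phi) | phi in family (fun i => mem (labellings (x i)))].
  apply/setP => -[k phi]; rewrite inE /= chart_kernels_eq //.
  apply/andP/imsetP => [[/eqP -> phi_lab] | [psi psi_lab [-> ->]]]; last by rewrite eqxx.
  by exists phi.
rewrite card_imset => [|phi psi [] //].
rewrite card_family foldrE big_map big_enum; apply: eq_bigr => i _.
by rewrite -(card_labellings (x_equiv i)).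
Qed.

Import GRing.Theory.
Local Open Scope ring_scope.

Lemma sum_cartdec_nclasses (w : nat -> rat) :
  \sum_(x : Dec | is_cartdec x) \prod_i (w (nclasses x i) * ((nclasses x i)`!)%:R) =
  (N`!)%:R * \sum_(k : K | (\prod_i (k i : nat) == N)%N) \prod_i w (k i).
Proof.
pose wt (p : K * Phi) := \prod_i w (p.1 i).
transitivity (\sum_(p : K * Phi | chart p.1 p.2) wt p).
  rewrite (partition_big (fun p : K * Phi => kernels p.2) is_cartdec) => [|p /chart_cartdec];
    last by move=> p_cd; apply/asboolP.
  apply: eq_bigr => x x_cd; rewrite big_split /= mulrC -natr_prod.
  rewrite -card_charts_of_cartdec // -sum1_card natr_sum mulr_suml.
  apply: eq_big => [p|p]; rewrite inE // => /andP [p_chart /eqP <-].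
  by rewrite mul1r; apply: eq_bigr => i _; rewrite (nclasses_kernels _ p_chart).
rewrite -(pair_big_dep xpredT chart (fun k _ => \prod_i w (k i))) mulr_sumr [RHS]big_mkcond.
apply: eq_bigr => k _; rewrite sumr_const.
have := card_charts k; rewrite (eq_card (B := [set phi | chart k phi])) => [-> | phi].
  by case: eqP; rewrite ?mulr0n // mulr_natl.
by rewrite inE.
Qed.

End Charts.

Lemma has_card_powD (F : species) (a : nat -> nat) (S : finType) (m : nat) :
  (forall n, has_card (F 'I_n) (a n)) ->
  has_card (powD F m S) (\sum_(x : {ffun 'I_m -> {ffun S * S -> bool}} | is_cartdec x)
                           \prod_i a (nclasses x i)).
Proof.
move=> ha; pose A : {pred {ffun 'I_m -> {ffun S * S -> bool}}} := [pred x | is_cartdec x].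
pose Y (x : {x | x \in A}) := forall i, F (classT (ffun_rel (val x i))).
have hY (x : {x | x \in A}) : has_card (Y x) (\prod_i a (nclasses (val x) i)).
  by apply: has_card_dprod => i; rewrite /nclasses -card_classT; apply: has_card_species.
have sum_Dc : \sum_(x : {x | x \in A}) \prod_i a (nclasses (val x) i) =
               \sum_(x : {ffun 'I_m -> {ffun S * S -> bool}} | is_cartdec x)
                  \prod_i a (nclasses x i).
  by rewrite [RHS](eq_bigl (fun x => x \in A)) // [RHS]big_sub.
pose toPow (p : {x : {x | x \in A} & Y x}) : powD F m S :=
  exist (fun q : rawD F m S => cartdec (projT1 q))
    (existT (fun d : 'I_m -> rel S => forall i, F (classT (d i)))
       (fun i => ffun_rel (val (tag p) i)) (tagged p))
    (elimT (asboolP _) (valP (tag p))).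
have toPow_bij : bijective toPow.
  apply: inj_surj_bijective => [[x fs] [x' fs'] E | [[d fs] d_cd]].
    have {}E := congr1 (@proj1_sig _ _) E; rewrite /= in E.
    have E_rel : (fun i => ffun_rel (val x i)) = (fun i => ffun_rel (val x' i)) := congr1 tag E.
    have xx' : x = x'.
      by apply/val_inj/ffunP => i; apply: (can_inj (@ffun_relK S)); exact: (congr1 (@^~ i) E_rel).
    by subst x'; rewrite (inj_pair2 _ _ _ _ _ E).
  pose x0 : {ffun 'I_m -> {ffun S * S -> bool}} := [ffun i => rel_ffun (d i)].
  have x0_rel : (fun i => ffun_rel (x0 i)) = d.
    by apply: functional_extensionality => i; rewrite ffunE rel_ffunK.
  have x0_cd : x0 \in A by rewrite inE; apply/asboolP; rewrite x0_rel.
  have transport d' : d' = d -> exists fs' : forall i, F (classT (d' i)),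
      existT _ d' fs' = existT (fun d => forall i, F (classT (d i))) d fs.
    by move=> ->; exists fs.
  have [fs' fs'E] := transport _ x0_rel.
  exists (existT Y (exist _ x0 x0_cd) fs').
  by apply: eq_sig_hprop => [q|]; [exact: proof_irrelevance | exact: fs'E].
by apply/(has_card_bij toPow_bij); rewrite -sum_Dc; apply: has_card_tagged.
Qed.

Definition empty_le1 (F : species) : Prop := forall A : finType, #|A| <= 1 -> F A -> False.

Section FactorPermutation.
Variables (F : species) (m : nat) (S : finType).

Lemma permD_ext (d : 'I_m -> rel S) (fs : forall i, F (classT (d i))) (h1 h2 : 'I_m -> 'I_m) :
  h1 =1 h2 ->
  existT (fun d : 'I_m -> rel S => forall i, F (classT (d i)))
    (fun i => d (h1 i)) (fun i => fs (h1 i)) =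
  existT (fun d : 'I_m -> rel S => forall i, F (classT (d i)))
    (fun i => d (h2 i)) (fun i => fs (h2 i)).
Proof. by move=> /functional_extensionality h12; subst h2. Qed.

Lemma permDM (s t : 'S_m) (p : rawD F m S) : permD s (permD t p) = permD (s * t)%g p.
Proof. by case: p => d fs; rewrite /permD /=; apply: permD_ext => i; rewrite permM. Qed.

Lemma permD1 (p : rawD F m S) : permD 1%g p = p.
Proof. by case: p => d fs; rewrite /permD /= (@permD_ext d fs _ id) // => i; rewrite perm1. Qed.

Lemma cartdec_perm (d : 'I_m -> rel S) (s : 'S_m) : cartdec d -> cartdec (d \o s).
Proof.
case=> d_equiv d_inj d_onto; split=> [i | u v uv | y] /=; first exact: d_equiv.
  by apply: d_inj => j; rewrite -(permKV s j); apply: uv.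
have [u u_y] := d_onto (fun j => y (s^-1 j)%g).
by exists u => i; rewrite -[i in y i](permK s); apply: u_y.
Qed.

Definition actD (s : 'S_m) (p : powD F m S) : powD F m S :=
  exist _ (permD s (proj1_sig p)) (cartdec_perm s (proj2_sig p)).

Lemma actDM (s t : 'S_m) (p : powD F m S) : actD s (actD t p) = actD (s * t)%g p.
Proof. by apply: eq_sig_hprop => [q|]; [exact: proof_irrelevance | exact: permDM]. Qed.

Lemma actD1 (p : powD F m S) : actD 1%g p = p.
Proof. by apply: eq_sig_hprop => [q|]; [exact: proof_irrelevance | exact: permD1]. Qed.

Lemma orbD_actD (p q : powD F m S) : orbD p q <-> exists s, q = actD s p.
Proof.
split=> [[s qs] | [s ->]]; last by exists s.
by exists s; apply: eq_sig_hprop => [r|]; [exact: proof_irrelevance | exact: qs].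
Qed.

Lemma orbD_refl (p : powD F m S) : orbD p p.
Proof. by apply/orbD_actD; exists 1%g; rewrite actD1. Qed.

Lemma orbD_sym (p q : powD F m S) : orbD p q -> orbD q p.
Proof. by case/orbD_actD => s ->; apply/orbD_actD; exists s^-1%g; rewrite actDM mulVg actD1. Qed.

Lemma orbD_trans (p q r : powD F m S) : orbD p q -> orbD q r -> orbD p r.
Proof.
by case/orbD_actD => s ->; case/orbD_actD => t ->; apply/orbD_actD; exists (t * s)%g; rewrite actDM.
Qed.

Lemma orbD_eq (p q : powD F m S) : orbD p q -> orbD p = orbD q.
Proof.
move=> pq; apply: functional_extensionality => r; apply: propositional_extensionality.
by split=> [pr | qr]; [exact: orbD_trans (orbD_sym pq) pr | exact: orbD_trans pq qr].
Qed.

Hypothesis F_small : empty_le1 F.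

Lemma actD_free (s : 'S_m) (p : powD F m S) : actD s p = p -> s = 1%g.
Proof.
case: p => [[d fs] d_cd] /(congr1 (fun q => projT1 (proj1_sig q))) /= d_s.
have [d_equiv _ d_onto] : cartdec d := d_cd.
apply/permP => i; rewrite perm1; apply/eqP/negP => /negP s_i.
have [|u [v ruv]] := card_classT_gt1 (d_equiv i).
  by rewrite ltnNge; apply/negP => /F_small; apply.
(* a point in the class of u in direction i and of v elsewhere separates d i from d (s i) *)
have [w w_uv] := d_onto (fun j => if j == i then u else v).
have d_si : d (s i) = d i := congr1 (fun d' => d' i) d_s.
have := w_uv (s i); have := w_uv i; rewrite eqxx (negbTE s_i) d_si => d_wu d_wv.
by rewrite -((d_equiv i) w u v).2 // d_wv in ruv.
Qed.

Lemma has_card_quot_orbD (P : nat) : has_card (powD F m S) P ->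
  exists q, has_card (quot (@orbD F m S)) q /\ q * m`! = P.
Proof.
move=> hP; pose Q := quot (@orbD F m S).
pose rep (c : Q) := proj1_sig (constructive_indefinite_description _ (proj2_sig c)).
have repE (c : Q) : proj1_sig c = orbD (rep c).
  by rewrite /rep; case: constructive_indefinite_description.
have act_bij : bijective (fun cs : Q * 'S_m => actD cs.2 (rep cs.1)).
  apply: inj_surj_bijective => [[c s] [c' s'] /= E | p].
    have rep_free : actD (s'^-1 * s)%g (rep c) = rep c'.
      by rewrite -actDM E actDM mulVg actD1.
    have cc' : c = c'.
      apply: eq_sig_hprop => [P'|]; first exact: proof_irrelevance.
      by rewrite !repE; apply: orbD_eq; apply/orbD_actD; exists (s'^-1 * s)%g.
    subst c'; have /actD_free ss' := rep_free.
    by rewrite -[s](mulKVg s') ss' mulg1.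
  pose c : Q := exist _ (orbD p) (ex_intro _ p erefl).
  have : orbD (rep c) p by rewrite -(repE c); apply: orbD_refl.
  by case/orbD_actD => s ->; exists (c, s).
have card_perm : has_card 'S_m m`! by rewrite -card_Sn; apply: has_card_card.
exact: has_card_pair_divl ((has_card_bij act_bij _).2 hP) card_perm (fact_gt0 m).
Qed.
End FactorPermutation.

Lemma has_card_expD_sum (F : species) (S : finType) (q : nat -> nat) (B : nat) :
  (forall n, has_card (quot (@orbD F n S)) (q n)) -> (forall n, B <= n -> q n = 0) ->
  has_card (expD F S) (\sum_(n < B) q n).
Proof.
move=> hq q0.
pose inj (p : {n : 'I_B & quot (@orbD F n S)}) : expD F S := existT _ (val (tag p)) (tagged p).
have inj_bij : bijective inj.
  apply: inj_surj_bijective => [[n c] [n' c'] E | [n c]].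
    have nn' : n = n' by apply: val_inj; exact: (congr1 (@projT1 _ _) E).
    by subst n'; have /= -> := inj_pair2 _ _ _ _ _ E.
  case: (ltnP n B) => [nB | Bn]; first by exists (existT _ (Ordinal nB) c).
  by have := hq n; rewrite q0 // => /has_card0 /(_ c).
by apply/(has_card_bij inj_bij)/has_card_tagged => n; apply: hq.
Qed.

Lemma powD_eq0 (F : species) (m : nat) (S : finType) :
  empty_le1 F -> #|S| = 0 -> powD F m S -> False.
Proof.
move=> F_small S0 [[d fs] [_ _ d_onto]].
case: m d fs d_onto => [|m] d fs d_onto.
  have [u _] := d_onto (@empty_ord_elim S).
  by have := card0_eq S0 u.
apply: (F_small _ _ (fs ord0)).
by rewrite card_classT (leq_trans (card_classes_le _)) ?S0.
Qed.

Section DirichletExponential.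
Import GRing.Theory Num.Theory.
Local Open Scope ring_scope.
Variables (F : species) (a : nat -> nat).
Hypothesis ha : forall n, has_card (F 'I_n) (a n).
Hypothesis F_small : empty_le1 F.
Local Notation f := (fun k => (a k)%:R / (k`!)%:R : rat).

Lemma has_card_quot_orbD_dpow (S : finType) (m : nat) : (0 < #|S|)%N ->
  exists q, has_card (quot (@orbD F m S)) q /\ q%:R = (#|S|`!)%:R * dpow f m #|S| / (m`!)%:R.
Proof.
move=> S_gt0; have [q [q_card q_fact]] := has_card_quot_orbD F_small (has_card_powD S m ha).
exists q; split=> //; apply: (mulIf (fact_neq0 m)); rewrite divfK ?fact_neq0 // -natrM q_fact.
rewrite (dpow_ffun_sum _ _ S_gt0 (leqnn _)) -(sum_cartdec_nclasses m S_gt0 f) natr_sum.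
apply: eq_bigr => x _; rewrite natr_prod; apply: eq_bigr => i _.
by rewrite divfK ?fact_neq0.
Qed.

Lemma has_card_expD_dexp (S : finType) : (0 < #|S|)%N ->
  exists b, has_card (expD F S) b /\ b%:R / (#|S|`!)%:R = dexp f #|S|.
Proof.
move=> S_gt0; have a1 : a 1%N = 0%N.
  by apply: has_card_uniq (ha 1%N) _; apply/has_card0/F_small; rewrite card_ord.
pose q m := proj1_sig (constructive_indefinite_description _ (has_card_quot_orbD_dpow m S_gt0)).
have [q_card q_val] : (forall m, has_card (quot (@orbD F m S)) (q m)) /\
    (forall m, (q m)%:R = (#|S|`!)%:R * dpow f m #|S| / (m`!)%:R).
  by split=> m; rewrite /q; case: constructive_indefinite_description => ? [].
have q0 m : (#|S| <= m)%N -> q m = 0%N.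
  by move=> Sm; apply/eqP; rewrite -(eqr_nat rat) q_val dpow_eq0 ?a1 ?mul0r // mulr0 mul0r.
exists (\sum_(m < #|S|) q m)%N; split; first exact: has_card_expD_sum q_card q0.
rewrite /dexp big_ord_recr /= dpow_eq0 ?a1 ?mul0r // addr0 natr_sum mulr_suml.
by apply: eq_bigr => m _; rewrite q_val [_ * dpow _ _ _]mulrC mulrAC mulfK ?fact_neq0.
Qed.

End DirichletExponential.

Theorem lemma3p5 (F : species) (tameF : tame F) (dirF : dirichlet F)
    (F1 : forall S : finType, #|S| = 1 -> F S -> False) :
  tame_fam (expD F) /\
  (forall a b : nat -> nat,
     (forall n, has_card (F 'I_n) (a n)) ->
     (forall n, has_card (expD F 'I_n) (b n)) ->
     forall n, 0 < n ->
       ((b n)%:R / (n`!)%:R : rat)%R =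
       dexp (fun k => ((a k)%:R / (k`!)%:R : rat)%R) n).
Proof.
have F_small : empty_le1 F.
  by move=> A; rewrite leq_eqVlt ltnS leqn0 => /orP [/eqP /F1 | /eqP /dirF].
split=> [S | a b ha hb n n_gt0].
  case: (posnP #|S|) => [S0 | S_gt0].
    by exists 0; apply/has_card0 => -[m [_ [p _]]]; apply: powD_eq0 F_small S0 p.
  pose a n := proj1_sig (constructive_indefinite_description _ (tameF 'I_n)).
  have ha n : has_card (F 'I_n) (a n).
    by rewrite /a; case: constructive_indefinite_description.
  by have [b [hb _]] := has_card_expD_dexp ha F_small S_gt0; exists b.
have [|b' [hb' b'E]] := has_card_expD_dexp ha F_small (S := 'I_n); first by rewrite card_ord.
by rewrite (has_card_uniq (hb n) hb') -[n in RHS]card_ord -b'E card_ord.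
Qed.
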